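(* Let $a,a',b,b':\mathbb{Z}\to\mathbb{C}$ be functions none of which is identically zero, and suppose $a(\mathbb{K})fb(\mathbb{K})=a'(\mathbb{K})fb'(\mathbb{K})$ for all $f\in\mathcal{D}$. Then there is a nonzero constant $\mu$ such that $a'(k)=\mu a(k)$ and $b'(k)=\frac1\mu b(k)$ for all $k\in\mathbb{Z}$.
   Context: Let $\{E_k\}$ be the canonical basis of $\ell^2(\mathbb{Z})$, $UE_k=E_{k+1}$, $\mathbb{K}E_k=kE_k$, and $a(\mathbb{K})E_k=a(k)E_k$ for $a:\mathbb{Z}\to\mathbb{C}$. $\mathcal{D}$ is the space of finite sums $f=\sum_nU^nf_n(\mathbb{K})$ with each $f_n:\mathbb{Z}\to\mathbb{C}$ finitely supported (operators on $\ell^2(\mathbb{Z})$ with finitely many nonzero matrix entries); the products are operator products. *)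

From HB Require Import structures.
From mathcomp Require Import all_boot all_order all_algebra.
From mathcomp Require Import complex.
From mathcomp Require Import Rstruct.
Set Implicit Arguments. Unset Strict Implicit. Unset Printing Implicit Defensive.
Import Order.TTheory GRing.Theory Num.Theory.
Local Open Scope ring_scope.

Definition C : Type := complex Rdefinitions.R.

(* An operator with finitely many nonzero matrix entries on l^2(Z) is
   represented by its matrix: opmat m k = <E_m, T E_k>. *)
Definition opmat := int -> int -> C.

Definition fin_supp (g : int -> C) : Prop :=
  exists s : seq int, forall k, k \notin s -> g k = 0.

(* Matrix of U^n g(K):  U^n g(K) E_k = g(k) E_{k+n}. *)
Definition shift_diag (n : int) (g : int -> C) : opmat :=
  fun m k => if m == k + n then g k else 0.

Definition opsum (l : seq (int * (int -> C))) : opmat :=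
  fun m k => \sum_(p <- l) shift_diag p.1 p.2 m k.

(* The space D of finite sums  sum_n U^n f_n(K)  with f_n finitely supported. *)
Definition inD (f : opmat) : Prop :=
  exists l : seq (int * (int -> C)),
    (forall p, List.In p l -> fin_supp p.2) /\ f = opsum l.

(* Matrix of the operator product a(K) f b(K):
   a(K) f b(K) E_k = b(k) sum_m f_{m,k} a(m) E_m. *)
Definition sandwich (a : int -> C) (f : opmat) (b : int -> C) : opmat :=
  fun m k => a m * f m k * b k.

From HB Require Import structures.
From mathcomp Require Import all_boot all_order all_algebra.
From mathcomp Require Import complex Rstruct.
Import GRing.Theory Num.Theory.
Local Open Scope ring_scope.

(* Testing the identity against the matrix units E_{m,k} of D shows that the
   outer products a(m) b(k) and a'(m) b'(k) coincide; two rank-one matrices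
   that agree and are nonzero have proportional factors. *)

Lemma outer_prod_eq_scale (F : fieldType) (I J : Type) (a a' : I -> F)
    (b b' : J -> F) (i0 : I) (j0 : J) :
  a i0 != 0 -> b j0 != 0 -> (forall i j, a i * b j = a' i * b' j) ->
  exists mu : F, mu != 0 /\
    (forall i, a' i = mu * a i) /\ (forall j, b' j = mu^-1 * b j).
Proof.
move=> ai0 bj0 ab_eq.
have : a' i0 * b' j0 != 0 by rewrite -ab_eq mulf_neq0.
rewrite mulf_eq0 negb_or => /andP[a'i0 b'j0].
set mu := b j0 / b' j0.
have mu0 : mu != 0 by rewrite mulf_neq0 ?invr_neq0.
have a'E i : a' i = mu * a i.
  by apply: (mulIf b'j0); rewrite -ab_eq mulrAC divfK // mulrC.
exists mu; split=> //; split=> // j.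
apply: (mulfI mu0); rewrite mulVKf //; apply: (mulfI ai0).
by rewrite ab_eq a'E mulrCA mulrA.
Qed.

Definition delta (k : int) : int -> C := fun j => (j == k)%:R.

Lemma fin_supp_delta k : fin_supp (delta k).
Proof. by exists [:: k] => j; rewrite inE /delta => /negbTE ->. Qed.

(* The matrix unit E_{m,k} = U^(m-k) delta_k(K). *)
Definition opunit (m k : int) : opmat := opsum [:: (m - k, delta k)].

Lemma inD_opunit m k : inD (opunit m k).
Proof.
by exists [:: (m - k, delta k)]; split=> // p [<- | []]; apply: fin_supp_delta.
Qed.

Lemma opunitE m k : opunit m k m k = 1.
Proof.
by rewrite /opunit /opsum big_seq1 /shift_diag /= addrC subrK eqxx /delta eqxx.
Qed.

Lemma sandwich_outer_eq (a a' b b' : int -> C) :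
  (forall f : opmat, inD f -> sandwich a f b = sandwich a' f b') ->
  forall m k, a m * b k = a' m * b' k.
Proof.
move=> sandwich_eq m k.
have := congr1 (fun T => T m k) (sandwich_eq _ (inD_opunit m k)).
by rewrite /sandwich opunitE !mulr1.
Qed.

Theorem mainTheorem17 (a a' b b' : int -> C) :
  (exists k, a k != 0) -> (exists k, a' k != 0) ->
  (exists k, b k != 0) -> (exists k, b' k != 0) ->
  (forall f : opmat, inD f -> sandwich a f b = sandwich a' f b') ->
  exists mu : C, mu != 0 /\
    (forall k, a' k = mu * a k) /\ (forall k, b' k = mu^-1 * b k).
Proof.
(* The nonvanishing of a' and b' is implied by that of a and b. *)
move=> [m0 am0] _ [k0 bk0] _ /sandwich_outer_eq.
exact: outer_prod_eq_scale am0 bk0.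
Qed.
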